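(* Let $X\in\mathbb R^{n\times p}$ and $\mathbf y\in\mathbb R^n$ be given, and suppose the coding complexity $c(\cdot)$ is sub-additive. Let $\bar\beta\in\mathbb R^p$ and let $\bar B_1,\ldots,\bar B_b\in\mathcal B$ be blocks with $\mathrm{supp}(\bar\beta)\subset\bar F=\bigcup_{j=1}^b\bar B_j$. Put $c(\bar\beta,\mathcal B)=\sum_{j=1}^b c(\bar B_j)$ and $\rho_0=\max_j\rho_+(\bar B_j)$. Let $F\subset\mathcal I$ satisfy $c(\bar B_j\cup F)\ge c(F)$ for all $j$, let \[ \beta=\arg\min_{\beta'\in\mathbb R^p}\|X\beta'-\mathbf y\|_2^2\quad\text{subject to}\quad\mathrm{supp}(\beta')\subset F, \] and suppose $\|X\beta-\mathbf y\|_2^2\ge\|X\bar\beta-\mathbf y\|_2^2$. Then \[ \max_j\phi(\bar B_j)\ge\frac{\rho_-(F\cup\bar F)}{\rho_0\,c(\bar\beta,\mathcal B)}\left[\|X\beta-\mathbf y\|_2^2-\|X\bar\beta-\mathbf y\|_2^2\right], \] where $\phi(B)=\dfrac{\|P_{B-F}(X\beta-\mathbf y)\|_2^2}{c(B\cup F)-c(F)}$.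
   Context: $\mathcal I=\{1,\ldots,p\}$; $\mathcal B$ is a collection of subsets of $\mathcal I$; $\mathrm{supp}(\beta)=\{j:\beta_j\ne0\}$. A function $\mathrm{cl}$ from subsets of $\mathcal I$ to $[0,\infty]$ is a coding length if $\sum_{F\subset\mathcal I,F\ne\emptyset}2^{-\mathrm{cl}(F)}\le1$, with $\mathrm{cl}(\emptyset)=0$; coding complexity $c(F)=|F|+\mathrm{cl}(F)$; sub-additive means $c(F\cup F')\le c(F)+c(F')$ for all $F,F'$. For $F\subset\mathcal I$: $\rho_-(F)=\inf\{\frac1n\|X\beta\|_2^2/\|\beta\|_2^2:\beta\ne0,\mathrm{supp}(\beta)\subset F\}$ and $\rho_+(F)$ the corresponding supremum. $P_F=X_F(X_F^\top X_F)^{-1}X_F^\top$ denotes the orthogonal projection onto the span of the columns of $X$ indexed by $F$, and $B-F$ denotes set difference. *)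

From HB Require Import structures.
From mathcomp Require Import all_boot all_order all_algebra.
From mathcomp Require Import all_classical all_reals all_analysis.
Set Implicit Arguments. Unset Strict Implicit. Unset Printing Implicit Defensive.
Import Order.TTheory GRing.Theory Num.Theory.
Local Open Scope ring_scope.
Local Open Scope classical_set_scope.

Section Defs.
Context {R : realType}.

Definition sqnorm {n : nat} (v : 'cV[R]_n) : R := \sum_i v i 0 ^+ 2.
Definition dotv {n : nat} (v w : 'cV[R]_n) : R := \sum_i v i 0 * w i 0.

Definition suppv {p : nat} (b : 'cV[R]_p) : {set 'I_p} := [set j | b j 0 != 0].

(* rho_-(S) = inf { (1/n)||X b||^2 / ||b||^2 : b <> 0, suppv b in S }  (inf of empty = +oo) *)
Definition rho_minus {n p : nat} (X : 'M[R]_(n, p)) (S : {set 'I_p}) : \bar R :=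
  ereal_inf [set ((n%:R)^-1 * sqnorm (X *m b) / sqnorm b)%:E
            | b in [set b : 'cV[R]_p | b != 0 /\ suppv b \subset S]].

(* rho_+(S) = sup of the same quantities (sup of empty = -oo) *)
Definition rho_plus {n p : nat} (X : 'M[R]_(n, p)) (S : {set 'I_p}) : \bar R :=
  ereal_sup [set ((n%:R)^-1 * sqnorm (X *m b) / sqnorm b)%:E
            | b in [set b : 'cV[R]_p | b != 0 /\ suppv b \subset S]].

Definition is_orth_proj {n p : nat} (X : 'M[R]_(n, p)) (S : {set 'I_p})
    (v w : 'cV[R]_n) : Prop :=
  (exists u : 'cV[R]_p, suppv u \subset S /\ w = X *m u) /\
  (forall u : 'cV[R]_p, suppv u \subset S -> dotv (v - w) (X *m u) = 0).

Definition orth_proj {n p : nat} (X : 'M[R]_(n, p)) (S : {set 'I_p})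
    (v : 'cV[R]_n) : 'cV[R]_n :=
  xget 0 [set w | is_orth_proj X S v w].

Definition pow2neg (x : \bar R) : R := if x is r%:E then 2 `^ (- r) else 0.

Definition coding_length {p : nat} (cl : {set 'I_p} -> \bar R) : Prop :=
  [/\ cl finset.set0 = 0%E, (forall S, (0 <= cl S)%E) &
      \sum_(S : {set 'I_p} | S != finset.set0) pow2neg (cl S) <= 1].

Definition ccomplex {p : nat} (cl : {set 'I_p} -> \bar R) (S : {set 'I_p}) : \bar R :=
  ((#|S|%:R)%:E + cl S)%E.

Definition cc_subadditive {p : nat} (cl : {set 'I_p} -> \bar R) : Prop :=
  forall S S' : {set 'I_p},
    (ccomplex cl (S :|: S') <= ccomplex cl S + ccomplex cl S')%E.

(* phi_blk(B) = ||P_{B - F} r||^2 / (c(B u F) - c(F)), computed in \bar R with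
   x / 0 = +oo for x > 0 and 0 / 0 = 0 (MathComp's inve / mule conventions) *)
Definition phi_blk {n p : nat} (X : 'M[R]_(n, p)) (cl : {set 'I_p} -> \bar R)
    (F : {set 'I_p}) (r : 'cV[R]_n) (B : {set 'I_p}) : \bar R :=
  ((sqnorm (orth_proj X (B :\: F) r))%:E *
   (ccomplex cl (B :|: F) - ccomplex cl F)^-1)%E.

End Defs.

From HB Require Import structures.
From mathcomp Require Import all_boot all_order all_algebra.
From mathcomp Require Import all_classical all_reals all_analysis.
From mathcomp Require Import ring lra.
Set Implicit Arguments.
Unset Strict Implicit.
Unset Printing Implicit Defensive.
Import Order.TTheory GRing.Theory Num.Theory.
Local Open Scope ring_scope.

(* Let r = X beta - y and D = betabar - beta.  Expanding squares, the gap
   |r|^2 - |X betabar - y|^2 equals -2 <r, X D> - |X D|^2, hence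
   |X D|^2 * gap <= <r, X D>^2.  Since beta is a least-squares fit on F, r is
   orthogonal to every X u with supp u in F, so <r, X D> = sum_j <r, X u_j>, where
   the u_j are the pieces of D carried by disjoint parts of the blocks B_j outside F.
   Each term satisfies <r, X u_j>^2 <= |P_(B_j - F) r|^2 |X u_j|^2
   <= phi(B_j) (c(B_j u F) - c(F)) * n rho_0 |u_j|^2; Cauchy-Schwarz over j and
   sub-additivity, c(B_j u F) - c(F) <= c(B_j), give
   <r, X D>^2 <= max_j phi(B_j) * c(betabar, B) * n rho_0 |D|^2, while
   |X D|^2 >= n rho_-(F u Fbar) |D|^2. *)

Section QuadraticDiscriminant.
Variable R : realFieldType.
Implicit Types a b c t : R.

Lemma sqr_le_of_quad_ge0 a b c : 0 <= c ->
  (forall t, 0 <= a + 2 * t * b + t ^+ 2 * c) -> b ^+ 2 <= a * c.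
Proof.
move=> c_ge0 quad_ge0; have [c0|c_neq0] := eqVneq c 0.
  rewrite c0 mulr0; have [->|b_neq0] := eqVneq b 0; first by rewrite expr0n.
  have := quad_ge0 (- (a + 1) / (2 * b)); rewrite c0 mulr0 addr0.
  have -> : 2 * (- (a + 1) / (2 * b)) * b = - (a + 1) by field.
  lra.
have c_gt0 : 0 < c by rewrite lt0r c_neq0.
have := quad_ge0 (- b / c).
have -> : a + 2 * (- b / c) * b + (- b / c) ^+ 2 * c = a - b ^+ 2 / c by field.
by rewrite subr_ge0 ler_pdivrMr.
Qed.

Lemma quad_ge0_of_sqr_le a b c : 0 <= a -> 0 <= c -> b ^+ 2 <= a * c ->
  forall t, 0 <= a + 2 * t * b + t ^+ 2 * c.
Proof.
move=> a_ge0 c_ge0 b2_le t; have [c0|c_neq0] := eqVneq c 0.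
  have b0 : b = 0 by apply/eqP; rewrite -sqrf_eq0 eq_le sqr_ge0 andbT -(mulr0 a) -c0.
  by rewrite b0 c0; lra.
have c_gt0 : 0 < c by rewrite lt0r c_neq0.
rewrite -(pmulr_rge0 _ c_gt0).
have -> : c * (a + 2 * t * b + t ^+ 2 * c) = (t * c + b) ^+ 2 + (a * c - b ^+ 2) by ring.
by rewrite addr_ge0 ?sqr_ge0 ?subr_ge0.
Qed.

Lemma sum_sqr_le (I : finType) (x a c : I -> R) :
  (forall j, 0 <= a j) -> (forall j, 0 <= c j) -> (forall j, x j ^+ 2 <= a j * c j) ->
  (\sum_j x j) ^+ 2 <= (\sum_j a j) * (\sum_j c j).
Proof.
move=> a_ge0 c_ge0 x2_le; apply: sqr_le_of_quad_ge0; first exact: sumr_ge0.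
move=> t; have -> : \sum_j a j + 2 * t * \sum_j x j + t ^+ 2 * \sum_j c j =
    \sum_j (a j + 2 * t * x j + t ^+ 2 * c j).
  by rewrite !big_split /= !mulr_sumr.
by apply: sumr_ge0 => j _; apply: quad_ge0_of_sqr_le.
Qed.

End QuadraticDiscriminant.

Section InnerProduct.
Variables (R : realType) (n : nat).
Implicit Types u v w : 'cV[R]_n.

Lemma sqnormE v : sqnorm v = dotv v v.
Proof. by apply: eq_bigr => i _; rewrite expr2. Qed.

Lemma dotvC u v : dotv u v = dotv v u.
Proof. by apply: eq_bigr => i _; rewrite mulrC. Qed.

Lemma dotvDl u v w : dotv (u + v) w = dotv u w + dotv v w.
Proof. by rewrite /dotv -big_split; apply: eq_bigr => i _; rewrite mxE mulrDl. Qed.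

Lemma dotvZl a u w : dotv (a *: u) w = a * dotv u w.
Proof. by rewrite /dotv mulr_sumr; apply: eq_bigr => i _; rewrite mxE mulrA. Qed.

Lemma dotvNl u w : dotv (- u) w = - dotv u w.
Proof. by rewrite -scaleN1r dotvZl mulN1r. Qed.

Lemma dotvBl u v w : dotv (u - v) w = dotv u w - dotv v w.
Proof. by rewrite dotvDl dotvNl. Qed.

Lemma dotvDr u v w : dotv w (u + v) = dotv w u + dotv w v.
Proof. by rewrite !(dotvC w) dotvDl. Qed.

Lemma dotvZr a u w : dotv w (a *: u) = a * dotv w u.
Proof. by rewrite !(dotvC w) dotvZl. Qed.

Lemma dotv0l u : dotv 0 u = 0.
Proof. by apply: big1 => i _; rewrite mxE mul0r. Qed.

Lemma dotv0r u : dotv u 0 = 0.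
Proof. by rewrite dotvC dotv0l. Qed.

Lemma dotv_sumr (I : Type) (s : seq I) (P : pred I) (f : I -> 'cV[R]_n) u :
  dotv u (\sum_(i <- s | P i) f i) = \sum_(i <- s | P i) dotv u (f i).
Proof.
by apply: (big_morph (dotv u)) => [v w|]; [exact: dotvDr | exact: dotv0r].
Qed.

Lemma sqnorm_ge0 v : 0 <= sqnorm v.
Proof. by apply: sumr_ge0 => i _; apply: sqr_ge0. Qed.

Lemma sqnorm0 : sqnorm (0 : 'cV[R]_n) = 0.
Proof. by rewrite sqnormE dotv0l. Qed.

Lemma sqnorm_eq0 v : (sqnorm v == 0) = (v == 0).
Proof.
apply/idP/eqP => [/eqP/psumr_eq0P v0|->]; last by rewrite sqnorm0.
apply/matrixP => i j; rewrite ord1 mxE; apply/eqP.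
by rewrite -sqrf_eq0; apply/eqP/v0 => // k _; apply: sqr_ge0.
Qed.

Lemma sqnorm_gt0 v : (0 < sqnorm v) = (v != 0).
Proof. by rewrite lt0r sqnorm_ge0 sqnorm_eq0 andbT. Qed.

Lemma dotv_sqr_le u v : dotv u v ^+ 2 <= sqnorm u * sqnorm v.
Proof.
apply: sqr_le_of_quad_ge0; first exact: sqnorm_ge0.
move=> t; have := sqnorm_ge0 (u + t *: v).
rewrite !sqnormE !dotvDl !dotvDr !dotvZl !dotvZr (dotvC v u); lra.
Qed.

End InnerProduct.

Lemma cV_neq0_dim_gt0 (R : realType) n (v : 'cV[R]_n) : v != 0 -> (0 < n)%N.
Proof.
by case: n v => // v; apply: contraNT => _; apply/eqP/matrixP => -[].
Qed.

Section Support.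
Variables (R : realType) (p : nat).
Implicit Types (S T : {set 'I_p}) (u v : 'cV[R]_p).

Lemma suppvP u S : reflect (forall k, k \notin S -> u k 0 = 0) (suppv u \subset S).
Proof.
apply: (iffP fintype.subsetP) => [suppS k|u0 k]; last first.
  by rewrite inE; apply: contraR => /u0 ->.
by apply: contraNeq => uk; apply: suppS; rewrite inE.
Qed.

Lemma suppv_neq0 u S : u != 0 -> suppv u \subset S -> S != finset.set0.
Proof.
move=> u_neq0 /suppvP u0; apply: contraTneq u_neq0 => S0; rewrite negbK.
by apply/eqP/matrixP => k l; rewrite ord1 mxE u0 // S0 inE.
Qed.

Definition restr S v : 'cV[R]_p := \col_k (if k \in S then v k 0 else 0).

Lemma suppv_restr S v : suppv (restr S v) \subset S.
Proof. by apply/suppvP => k kS; rewrite mxE (negbTE kS). Qed.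

Lemma restr_setU1 i T u : suppv u \subset i |: T ->
  u = restr T u + (u i 0 - restr T u i 0) *: delta_mx i 0.
Proof.
move=> /suppvP u0; apply/matrixP => k l; rewrite ord1 !mxE eqxx andbT.
have [->|ki] := eqVneq k i; first by rewrite mulr1 addrC subrK.
rewrite mulr0 addr0; case: ifP => // kT.
by rewrite u0 // !inE negb_or ki kT.
Qed.

End Support.

Section OrthogonalProjection.
Variables (R : realType) (n p : nat) (X : 'M[R]_(n, p)).
Implicit Types (S T : {set 'I_p}) (v w r : 'cV[R]_n) (u : 'cV[R]_p).

Lemma orthogonal_residual S v w u : is_orth_proj X S v w -> suppv u \subset S ->
  dotv v (X *m u) = dotv w (X *m u).
Proof. by move=> [_ orth] /orth; rewrite dotvBl => /eqP; rewrite subr_eq0 => /eqP. Qed.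

Lemma is_orth_proj_set0 v : is_orth_proj X finset.set0 v 0.
Proof.
split; first by exists 0; rewrite mulmx0; split => //; apply/suppvP => k _; rewrite mxE.
move=> u /suppvP u0; have -> : u = 0 by apply/matrixP => k l; rewrite ord1 mxE u0 ?inE.
by rewrite mulmx0 dotv0r.
Qed.

(* One Gram-Schmidt step: [P_(i |: T) v = P_T v + c e], where [e] is the part of
   column [i] orthogonal to the columns in [T]. *)
Lemma is_orth_proj_setU1 T i :
  (forall v, exists w, is_orth_proj X T v w) ->
  forall v, exists w, is_orth_proj X (i |: T) v w.
Proof.
move=> projT v.
have [Q [[uQ [suppQ ->]] orthQ]] := projT (X *m delta_mx i 0).
have [Pv projPv] := projT v; have [[uP [suppP PvE]] _] := projPv.
set e := X *m delta_mx i 0 - X *m uQ.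
set c := dotv v e / dotv e e.
have e_orth u : suppv u \subset T -> dotv e (X *m u) = 0 by apply: orthQ.
have ce : c * dotv e e = dotv v e.
  have [ee0|ee_neq0] := eqVneq (dotv e e) 0; last by rewrite divfK.
  move: ee0; rewrite -sqnormE => /eqP; rewrite sqnorm_eq0 => /eqP ->.
  by rewrite sqnorm0 dotv0r mulr0.
exists (Pv + c *: e); split.
  exists (uP + c *: (delta_mx i 0 - uQ)); split.
    move: suppP suppQ => /suppvP uP0 /suppvP uQ0.
    apply/suppvP => k; rewrite !inE negb_or => /andP[ki kT].
    by rewrite !mxE uP0 // uQ0 // (negbTE ki) subr0 mulr0 addr0.
  by rewrite mulmxDr -scalemxAr mulmxBr PvE.
have col_i : X *m delta_mx i 0 = e + X *m uQ by rewrite subrK.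
have Pv_e : dotv Pv e = 0 by rewrite PvE dotvC e_orth.
clearbody e c.
move=> u supp_u; rewrite (restr_setU1 supp_u) mulmxDr -scalemxAr col_i.
rewrite opprD addrA !dotvDr !dotvZr !dotvBl !dotvZl !dotvDr.
rewrite !(orthogonal_residual projPv) ?suppv_restr // !e_orth ?suppv_restr //.
rewrite Pv_e addr0 ce mulr0 subrr add0r; lra.
Qed.

Lemma exists_orth_proj S v : exists w, is_orth_proj X S v w.
Proof.
move: v; have [N] := ubnP #|S|; elim: N S => // N IH S card_S.
have [->|[i iS]] := set_0Vmem S; first by move=> v; exists 0; apply: is_orth_proj_set0.
rewrite -(finset.setD1K iS); apply: is_orth_proj_setU1; apply: IH.
by move: card_S; rewrite (cardsD1 i S) iS.
Qed.

Lemma orth_projP S v : is_orth_proj X S v (orth_proj X S v).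
Proof. exact: (xgetPex 0 (exists_orth_proj S v)). Qed.

Lemma sqr_dotv_le_orth_proj S r u : suppv u \subset S ->
  dotv r (X *m u) ^+ 2 <= sqnorm (orth_proj X S r) * sqnorm (X *m u).
Proof. by move=> supp_u; rewrite (orthogonal_residual (orth_projP S r)) // dotv_sqr_le. Qed.

End OrthogonalProjection.

Section BlockPartition.
Variables (p b : nat) (B : 'I_b -> {set 'I_p}) (F : {set 'I_p}).

Definition block_part (j : 'I_b) : {set 'I_p} :=
  [set i in B j :\: F | [forall k : 'I_b, (k < j)%N ==> (i \notin B k)]].

Lemma block_part_sub j : block_part j \subset B j :\: F.
Proof. by apply/fintype.subsetP => i; rewrite inE => /andP[]. Qed.

Lemma suppv_restr_block_part (R : realType) j (v : 'cV[R]_p) :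
  suppv (restr (block_part j) v) \subset B j :\: F.
Proof. exact: fintype.subset_trans (suppv_restr _ _) (block_part_sub j). Qed.

Lemma block_part_disjoint j k i : j != k -> i \in block_part j -> i \notin block_part k.
Proof.
rewrite !inE => jk /andP[/andP[_ ij] /forallP before_j].
apply/negP => /andP[/andP[_ ik] /forallP before_k].
have [jk'|kj|/val_inj eq_jk] := ltngtP j k; last by rewrite eq_jk eqxx in jk.
  by have := before_k j; rewrite jk' ij.
by have := before_j k; rewrite kj ik.
Qed.

Lemma block_part_cover i : i \notin F -> i \in (\bigcup_(j < b) B j)%SET ->
  exists j, i \in block_part j.
Proof.
move=> iF /bigcupP[j0 _ ij0].
have [k ik kmin] := @arg_minnP _ j0 (fun j => i \in B j) (fun j : 'I_b => val j) ij0.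
exists k; rewrite !inE ik iF /=; apply/forallP => l; apply/implyP => lk.
by apply/negP => il; have := kmin l il; rewrite leqNgt lk.
Qed.

Lemma sum_block_part (R : realType) (x : R) i :
  \sum_j (if i \in block_part j then x else 0) =
  if (i \notin F) && (i \in (\bigcup_(j < b) B j)%SET) then x else 0.
Proof.
case: ifP => [/andP[iF iU]|not_cover].
  have [j ij] := block_part_cover iF iU.
  rewrite (bigD1 j) //= ij big1 ?addr0 // => k kj.
  by rewrite (negbTE (block_part_disjoint _ ij)) // eq_sym.
apply: big1 => j _; case: ifP => // ij.
have := fintype.subsetP (block_part_sub j) i ij; rewrite !inE => /andP[iF ijB].
suff iU : i \in (\bigcup_(j < b) B j)%SET by rewrite iF iU in not_cover.
by apply/bigcupP; exists j.
Qed.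

Lemma restr_block_partE (R : realType) (v : 'cV[R]_p) :
  suppv v \subset F :|: (\bigcup_(j < b) B j)%SET ->
  v = restr F v + \sum_j restr (block_part j) v.
Proof.
move=> /suppvP v0; apply/matrixP => k l; rewrite ord1 !mxE summxE.
under eq_bigr do rewrite mxE.
rewrite sum_block_part; case: ifP => kF /=; first by rewrite addr0.
case: ifP => kU; first by rewrite add0r.
by rewrite addr0 v0 // inE negb_or kF kU.
Qed.

Lemma sum_sqnorm_restr_block_part_le (R : realType) (v : 'cV[R]_p) :
  \sum_j sqnorm (restr (block_part j) v) <= sqnorm v.
Proof.
rewrite /sqnorm exchange_big /=; apply: ler_sum => k _.
under eq_bigr do rewrite mxE (fun_if (fun x => x ^+ 2)) expr0n /=.
by rewrite sum_block_part; case: ifP => _ //; exact: sqr_ge0.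
Qed.

End BlockPartition.

Section LeastSquares.
Variables (R : realType) (n p : nat) (X : 'M[R]_(n, p)) (y : 'cV[R]_n).
Variables (F : {set 'I_p}) (beta : 'cV[R]_p).
Hypotheses (supp_beta : suppv beta \subset F)
  (beta_opt : forall beta', suppv beta' \subset F ->
     sqnorm (X *m beta - y) <= sqnorm (X *m beta' - y)).

Lemma lsq_residual_orth v : suppv v \subset F -> dotv (X *m beta - y) (X *m v) = 0.
Proof.
move=> supp_v; set r := X *m beta - y.
have quad_ge0 t : 0 <= 0 + 2 * t * dotv r (X *m v) + t ^+ 2 * sqnorm (X *m v).
  have supp_t : suppv (beta + t *: v) \subset F.
    move: supp_beta supp_v => /suppvP b0 /suppvP v0.
    by apply/suppvP => k kF; rewrite !mxE b0 // v0 // mulr0 addr0.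
  have expand : X *m (beta + t *: v) - y = r + t *: (X *m v).
    by rewrite mulmxDr -scalemxAr addrAC.
  have := beta_opt supp_t; rewrite expand -/r; clearbody r.
  rewrite !sqnormE !dotvDl !dotvDr !dotvZl !dotvZr (dotvC (X *m v) r); lra.
have := sqr_le_of_quad_ge0 (sqnorm_ge0 _) quad_ge0; rewrite mul0r => sqr_le0.
by apply/eqP; rewrite -sqrf_eq0 eq_le sqr_le0 sqr_ge0.
Qed.

End LeastSquares.

Section Rayleigh.
Variables (R : realType) (n p : nat) (X : 'M[R]_(n, p)).
Implicit Types (S : {set 'I_p}) (v : 'cV[R]_p) (rho mu : R).

Definition rayleigh v : R := n%:R^-1 * sqnorm (X *m v) / sqnorm v.

Lemma rayleigh_ge0 v : 0 <= rayleigh v.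
Proof. by rewrite /rayleigh !mulr_ge0 ?invr_ge0 ?sqnorm_ge0. Qed.

Lemma rayleighE v : (0 < n)%N -> v != 0 ->
  rayleigh v = sqnorm (X *m v) / (n%:R * sqnorm v).
Proof. by move=> n_gt0 v_neq0; rewrite /rayleigh invfM mulrCA mulrA. Qed.

Lemma ler_rayleigh rho v : (0 < n)%N -> v != 0 ->
  (rho <= rayleigh v) = (n%:R * rho * sqnorm v <= sqnorm (X *m v)).
Proof.
move=> n_gt0 v_neq0; rewrite rayleighE // ler_pdivlMr; first by rewrite mulrCA mulrA.
by rewrite mulr_gt0 ?ltr0n ?sqnorm_gt0.
Qed.

Lemma rayleigh_ler mu v : (0 < n)%N -> v != 0 ->
  (rayleigh v <= mu) = (sqnorm (X *m v) <= n%:R * mu * sqnorm v).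
Proof.
move=> n_gt0 v_neq0; rewrite rayleighE // ler_pdivrMr; first by rewrite mulrCA mulrA.
by rewrite mulr_gt0 ?ltr0n ?sqnorm_gt0.
Qed.

Lemma rayleigh_gt0 v : X *m v != 0 -> 0 < rayleigh v.
Proof.
move=> Xv_neq0; have v_neq0 : v != 0 by apply: contraNneq Xv_neq0 => ->; rewrite mulmx0.
by rewrite /rayleigh !mulr_gt0 ?invr_gt0 ?ltr0n ?sqnorm_gt0 ?(cV_neq0_dim_gt0 Xv_neq0).
Qed.

Lemma rho_minus_ge0 S : (0 <= rho_minus X S)%E.
Proof. by apply: le_ereal_inf_tmp => _ [v _ <-]; rewrite lee_fin; exact: rayleigh_ge0. Qed.

Lemma rho_minus_le_rayleigh S v : v != 0 -> suppv v \subset S ->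
  (rho_minus X S <= (rayleigh v)%:E)%E.
Proof. by move=> v_neq0 supp_v; apply: ereal_inf_lbound; exists v. Qed.

Lemma rayleigh_le_rho_plus S v : v != 0 -> suppv v \subset S ->
  ((rayleigh v)%:E <= rho_plus X S)%E.
Proof. by move=> v_neq0 supp_v; apply: ereal_sup_ubound; exists v. Qed.

Lemma rayleigh_le_bigmax_rho_plus b (B : 'I_b -> {set 'I_p}) j v :
  v != 0 -> suppv v \subset B j ->
  ((rayleigh v)%:E <= \big[maxe/-oo]_(i < b) rho_plus X (B i))%E.
Proof.
by move=> v_neq0 supp_v; apply: le_trans (le_bigmax _ _ j); apply: rayleigh_le_rho_plus.
Qed.

End Rayleigh.

Lemma ler_mul_of_lee_mul_inv (R : realType) (q d phi : R) : 0 <= q -> 0 <= d ->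
  (q%:E * (d%:E)^-1 <= phi%:E)%E -> q <= phi * d.
Proof.
move=> q_ge0 d_ge0; rewrite inver; have [->|d_neq0] := eqVneq d 0.
  have [->|q_neq0] := eqVneq q 0; first by rewrite mulr0.
  have q_gt0 : 0 < q by rewrite lt0r q_neq0.
  by rewrite gt0_muley ?lte_fin // leye_eq.
by rewrite -EFinM lee_fin ler_pdivrMr // lt0r d_neq0.
Qed.

Lemma ereal_ratio_le (R : realType) (m M S P : \bar R) (d : R) :
  m \is a fin_num -> (0 < M)%E -> (0 < S)%E -> (0 <= P)%E ->
  (forall rho mu sigma phi : R, m = rho%:E -> M = mu%:E -> S = sigma%:E ->
     P = phi%:E -> rho * d <= phi * (mu * sigma)) ->
  (m * (M * S)^-1 * d%:E <= P)%E.
Proof.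
move=> m_fin M_gt0 S_gt0 P_ge0 real_le.
have [->|P_noo] := eqVneq P +oo%E; first by rewrite leey.
have [->|MS_noo] := eqVneq (M * S)%E +oo%E; first by rewrite invey mule0 mul0e.
have M_fin : M \is a fin_num.
  rewrite ge0_fin_numE ?ltW // ltey; apply: contra MS_noo => /eqP ->.
  by rewrite gt0_mulye.
have S_fin : S \is a fin_num.
  rewrite ge0_fin_numE ?ltW // ltey; apply: contra MS_noo => /eqP ->.
  by rewrite gt0_muley.
have P_fin : P \is a fin_num by rewrite ge0_fin_numE // ltey.
have MS_gt0 : 0 < fine M * fine S.
  by rewrite mulr_gt0 // fine_gt0 // ?M_gt0 ?S_gt0 ltey_eq ?M_fin ?S_fin.
rewrite -(fineK m_fin) -(fineK M_fin) -(fineK S_fin) -(fineK P_fin).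
rewrite -EFinM inver (gt_eqF MS_gt0) -!EFinM lee_fin mulrAC ler_pdivrMr //.
by apply: real_le; rewrite fineK.
Qed.

Section CodingComplexity.
Variables (R : realType) (p : nat) (cl : {set 'I_p} -> \bar R).
Implicit Types (S B F : {set 'I_p}).

Lemma phi_blk_ge0 n (X : 'M[R]_(n, p)) F r B : ccomplex cl F \is a fin_num ->
  (ccomplex cl F <= ccomplex cl (B :|: F))%E -> (0 <= phi_blk X cl F r B)%E.
Proof.
move=> cF_fin cF_le; rewrite /phi_blk mule_ge0 ?lee_fin ?sqnorm_ge0 //.
by rewrite inve_ge0 suber_ge0.
Qed.

Lemma sqnorm_orth_proj_le_phi_blk n (X : 'M[R]_(n, p)) F r B (phi : R) :
  ccomplex cl F \is a fin_num -> ccomplex cl (B :|: F) \is a fin_num ->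
  (ccomplex cl F <= ccomplex cl (B :|: F))%E ->
  (phi_blk X cl F r B <= phi%:E)%E ->
  sqnorm (orth_proj X (B :\: F) r) <=
    phi * (fine (ccomplex cl (B :|: F)) - fine (ccomplex cl F)).
Proof.
move=> cF_fin cBF_fin cF_le; rewrite /phi_blk -(fineK cF_fin) -(fineK cBF_fin) -EFinB.
by apply: ler_mul_of_lee_mul_inv; rewrite ?sqnorm_ge0 ?subr_ge0 ?fine_le.
Qed.

Hypothesis cl_ge0 : forall S, (0 <= cl S)%E.

Lemma ccomplex_ge0 S : (0 <= ccomplex cl S)%E.
Proof. by rewrite /ccomplex adde_ge0 ?lee_fin. Qed.

Lemma ccomplex_gt0 S : S != finset.set0 -> (0 < ccomplex cl S)%E.
Proof.
move=> S_neq0; apply: lt_le_trans (lee_paddr (cl_ge0 S) (lexx _)).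
by rewrite lte_fin ltr0n card_gt0.
Qed.

Lemma ccomplex_le_sum b (B : 'I_b -> {set 'I_p}) j :
  (ccomplex cl (B j) <= \sum_(i < b) ccomplex cl (B i))%E.
Proof. by rewrite (bigD1 j) //= lee_paddr // sume_ge0 // => i _; apply: ccomplex_ge0. Qed.

Hypothesis subadd : cc_subadditive cl.

Lemma ccomplex_setU_fin B F : ccomplex cl B \is a fin_num ->
  ccomplex cl F \is a fin_num -> ccomplex cl (B :|: F) \is a fin_num.
Proof.
move=> cB_fin cF_fin; rewrite ge0_fin_numE ?ccomplex_ge0 //.
by apply: le_lt_trans (subadd B F) _; rewrite ltey_eq fin_numD cB_fin cF_fin.
Qed.

Lemma ccomplex_gain_le B F : ccomplex cl B \is a fin_num ->
  ccomplex cl F \is a fin_num ->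
  fine (ccomplex cl (B :|: F)) - fine (ccomplex cl F) <= fine (ccomplex cl B).
Proof.
move=> cB_fin cF_fin; rewrite lerBlDr -fineD //.
by rewrite fine_le ?ccomplex_setU_fin ?subadd // fin_numD cB_fin cF_fin.
Qed.

Lemma phi_blk_weights n (X : 'M[R]_(n, p)) F r b (B : 'I_b -> {set 'I_p})
    (phi sigma : R) :
  ccomplex cl F \is a fin_num -> (forall j, ccomplex cl F <= ccomplex cl (B j :|: F))%E ->
  (\sum_(j < b) ccomplex cl (B j) = sigma%:E)%E ->
  (\big[maxe/-oo]_(j < b) phi_blk X cl F r (B j) = phi%:E)%E ->
  exists w : 'I_b -> R, [/\ forall j, 0 <= w j, \sum_j w j <= sigma &
    forall j, sqnorm (orth_proj X (B j :\: F) r) <= phi * w j].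
Proof.
move=> cF_fin cF_le sum_c max_phi.
have cB_fin j : ccomplex cl (B j) \is a fin_num.
  by rewrite ge0_fin_numE ?ccomplex_ge0 // (le_lt_trans (ccomplex_le_sum B j)) // sum_c ltry.
have cBF_fin j := ccomplex_setU_fin (cB_fin j) cF_fin.
exists (fun j => fine (ccomplex cl (B j :|: F)) - fine (ccomplex cl F)); split.
- by move=> j; rewrite subr_ge0 fine_le.
- rewrite (_ : sigma = fine (\sum_(j < b) ccomplex cl (B j))); last by rewrite sum_c.
  rewrite -sum_fine => [|j _]; last exact: cB_fin.
  by apply: ler_sum => j _; apply: ccomplex_gain_le.
move=> j; apply: sqnorm_orth_proj_le_phi_blk => //.
by rewrite -max_phi; apply: (le_bigmax _ (fun j => phi_blk X cl F r (B j)) j).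
Qed.

End CodingComplexity.

Section ResidualGap.
Variables (R : realType) (n p b : nat) (X : 'M[R]_(n, p)) (y : 'cV[R]_n).
Variables (F : {set 'I_p}) (B : 'I_b -> {set 'I_p}) (beta betabar : 'cV[R]_p).
Hypotheses (supp_beta : suppv beta \subset F)
  (beta_opt : forall beta', suppv beta' \subset F ->
     sqnorm (X *m beta - y) <= sqnorm (X *m beta' - y))
  (supp_betabar : suppv betabar \subset (\bigcup_(j < b) B j)%SET).

Local Notation r := (X *m beta - y).
Local Notation D := (betabar - beta).
Local Notation gap := (sqnorm (X *m beta - y) - sqnorm (X *m betabar - y)).
Local Notation u j := (restr (block_part B F j) (betabar - beta)).

Lemma suppv_diff : suppv D \subset F :|: (\bigcup_(j < b) B j)%SET.
Proof.
move: supp_beta supp_betabar => /suppvP beta0 /suppvP betabar0.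
apply/suppvP => k; rewrite inE negb_or => /andP[kF kU].
by rewrite !mxE beta0 // betabar0 // subr0.
Qed.

Lemma gapE : gap = - 2 * dotv r (X *m D) - sqnorm (X *m D).
Proof.
have -> : X *m betabar - y = r + X *m D by rewrite mulmxBr addrAC addrCA subrr addr0.
move: r (X *m D) => r0 d.
by rewrite !sqnormE !dotvDl !dotvDr (dotvC d r0); ring.
Qed.

Lemma gap_gt0_dotv_neq0 : 0 < gap -> dotv r (X *m D) != 0.
Proof.
rewrite gapE => gap_gt0; apply/eqP => a0.
by move: gap_gt0; rewrite a0 mulr0 sub0r oppr_gt0 ltNge sqnorm_ge0.
Qed.

Lemma gap_gt0_XD_neq0 : 0 < gap -> X *m D != 0.
Proof. by move/gap_gt0_dotv_neq0; apply: contraNneq => ->; rewrite dotv0r. Qed.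

Lemma dotv_residual_blocks : dotv r (X *m D) = \sum_j dotv r (X *m u j).
Proof.
rewrite {1}(restr_block_partE suppv_diff) mulmxDr dotvDr.
by rewrite (lsq_residual_orth supp_beta beta_opt) ?suppv_restr // add0r mulmx_sumr dotv_sumr.
Qed.

Lemma gap_gt0_block : 0 < gap ->
  exists j v, [/\ v != 0, suppv v \subset B j & 0 < rayleigh X v].
Proof.
move=> /gap_gt0_dotv_neq0; rewrite dotv_residual_blocks => sum_neq0.
have [j term_neq0] : exists j, dotv r (X *m u j) != 0.
  apply/existsP; apply: contraNT sum_neq0; rewrite negb_exists => /forallP all0.
  by apply/eqP/big1 => j _; apply/eqP/negPn/all0.
have Xu_neq0 : X *m u j != 0 by apply: contraNneq term_neq0 => ->; rewrite dotv0r.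
exists j, (u j); split; last exact: rayleigh_gt0.
  by apply: contraNneq Xu_neq0 => ->; rewrite mulmx0.
exact: fintype.subset_trans (suppv_restr_block_part _ _ _ _) (subsetDl _ _).
Qed.

Lemma sqr_dotv_residual_le (phi kappa W : R) (w : 'I_b -> R) :
  0 <= phi -> 0 <= kappa -> (forall j, 0 <= w j) -> \sum_j w j <= W ->
  (forall j, sqnorm (orth_proj X (B j :\: F) r) <= phi * w j) ->
  (forall j v, suppv v \subset B j -> sqnorm (X *m v) <= kappa * sqnorm v) ->
  dotv r (X *m D) ^+ 2 <= phi * W * (kappa * sqnorm D).
Proof.
move=> phi_ge0 kappa_ge0 w_ge0 sum_w proj_le X_le; rewrite dotv_residual_blocks.
apply: le_trans (sum_sqr_le (a := fun j => phi * w j)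
                            (c := fun j => sqnorm (X *m u j)) _ _ _) _.
- by move=> j; rewrite mulr_ge0.
- by move=> j; rewrite sqnorm_ge0.
- move=> j; apply: le_trans (sqr_dotv_le_orth_proj X r (suppv_restr_block_part _ _ _ _)) _.
  by rewrite ler_wpM2r ?sqnorm_ge0.
have supp_u j : suppv (u j) \subset B j.
  exact: fintype.subset_trans (suppv_restr_block_part _ _ _ _) (subsetDl _ _).
apply: ler_pM.
- by apply: sumr_ge0 => j _; rewrite mulr_ge0.
- by apply: sumr_ge0 => j _; rewrite sqnorm_ge0.
- by rewrite -mulr_sumr ler_wpM2l.
apply: le_trans (ler_sum _ (fun j _ => X_le j _ (supp_u j))) _.
by rewrite -mulr_sumr ler_wpM2l // sum_sqnorm_restr_block_part_le.
Qed.

Lemma gap_le (rho mu phi W : R) (w : 'I_b -> R) :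
  0 <= phi -> 0 <= mu -> (forall j, 0 <= w j) -> \sum_j w j <= W ->
  (forall j, sqnorm (orth_proj X (B j :\: F) r) <= phi * w j) ->
  (forall j v, v != 0 -> suppv v \subset B j -> rayleigh X v <= mu) ->
  0 < gap -> rho <= rayleigh X D -> rho * gap <= phi * (mu * W).
Proof.
move=> phi_ge0 mu_ge0 w_ge0 sum_w proj_le ray_le gap_gt0.
have XD_neq0 := gap_gt0_XD_neq0 gap_gt0; have n_gt0 := cV_neq0_dim_gt0 XD_neq0.
have D_neq0 : D != 0 by apply: contraNneq XD_neq0 => ->; rewrite mulmx0.
rewrite (ler_rayleigh _ _ n_gt0 D_neq0) => rho_le.
have X_le j v : suppv v \subset B j -> sqnorm (X *m v) <= n%:R * mu * sqnorm v.
  move=> supp_v; have [->|v_neq0] := eqVneq v 0; first by rewrite mulmx0 !sqnorm0 mulr0.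
  by rewrite -(rayleigh_ler _ _ n_gt0 v_neq0); apply: ray_le supp_v.
have a2_le := sqr_dotv_residual_le phi_ge0 (mulr_ge0 (ler0n _ _) mu_ge0) w_ge0 sum_w
  proj_le X_le.
(* [(a + t)^2 >= 0] with [a = <r, X D>], [t = |X D|^2] and [gap = -2a - t]. *)
have gap_le_a2 : sqnorm (X *m D) * gap <= dotv r (X *m D) ^+ 2.
  rewrite gapE; move: (dotv _ _) (sqnorm _) => a t.
  by rewrite -subr_ge0 (_ : _ - _ = (a + t) ^+ 2) ?sqr_ge0 //; ring.
have nD_gt0 : 0 < n%:R * sqnorm D by rewrite mulr_gt0 ?ltr0n ?sqnorm_gt0.
rewrite -(ler_pM2r nD_gt0).
have -> : phi * (mu * W) * (n%:R * sqnorm D) = phi * W * (n%:R * mu * sqnorm D) by ring.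
apply: le_trans (le_trans gap_le_a2 a2_le).
rewrite (_ : rho * gap * _ = n%:R * rho * sqnorm D * gap); last by ring.
by rewrite ler_wpM2r // ltW.
Qed.

Lemma rho_minus_le_rayleigh_diff : 0 < gap ->
  (rho_minus X (F :|: (\bigcup_(j < b) B j)%SET) <= (rayleigh X D)%:E)%E.
Proof.
move=> /gap_gt0_XD_neq0 XD_neq0; apply: rho_minus_le_rayleigh suppv_diff.
by apply: contraNneq XD_neq0 => ->; rewrite mulmx0.
Qed.

End ResidualGap.

Theorem lemma8 (R : realType) (n p : nat) (X : 'M[R]_(n, p)) (y : 'cV[R]_n)
    (cl : {set 'I_p} -> \bar R) (Bcal : {set {set 'I_p}})
    (b : nat) (Bbar : 'I_b -> {set 'I_p}) (betabar : 'cV[R]_p)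
    (F : {set 'I_p}) (beta : 'cV[R]_p) :
  coding_length cl ->
  cc_subadditive cl ->
  (0 < b)%N ->
  (forall j, Bbar j \in Bcal) ->
  suppv betabar \subset (\bigcup_(j < b) Bbar j)%SET ->
  ccomplex cl F \is a fin_num ->
  (forall j, ccomplex cl F <= ccomplex cl (Bbar j :|: F))%E ->
  suppv beta \subset F ->
  (forall beta' : 'cV[R]_p, suppv beta' \subset F ->
     sqnorm (X *m beta - y) <= sqnorm (X *m beta' - y)) ->
  sqnorm (X *m beta - y) >= sqnorm (X *m betabar - y) ->
  (rho_minus X (F :|: (\bigcup_(j < b) Bbar j)%SET)
     * ((\big[maxe/-oo]_(j < b) rho_plus X (Bbar j))
        * (\sum_(j < b) ccomplex cl (Bbar j)))^-1
     * (sqnorm (X *m beta - y) - sqnorm (X *m betabar - y))%:E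
   <= \big[maxe/-oo]_(j < b) phi_blk X cl F (X *m beta - y) (Bbar j))%E.
Proof.
move=> [_ cl_ge0 _] subadd b_gt0 _ supp_betabar cF_fin cF_le supp_beta beta_opt gap_ge0.
set gap := (X in X%:E).
set M := (X in (_ * (X * _)^-1)%E); set S := (X in (_ * (_ * X)^-1)%E).
set P := (X in (_ <= X)%E).
have P_ge0 : (0 <= P)%E.
  by apply: le_trans (le_bigmax _ _ (Ordinal b_gt0)); apply: phi_blk_ge0.
have [->|gap_neq0] := eqVneq gap 0; first by rewrite mule0.
have gap_gt0 : 0 < gap by rewrite lt0r gap_neq0 subr_ge0.
have m_le := rho_minus_le_rayleigh_diff supp_beta supp_betabar gap_gt0.
have [j [v [v_neq0 supp_v rayleigh_v_gt0]]] :=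
  gap_gt0_block supp_beta beta_opt supp_betabar gap_gt0.
have M_gt0 : (0 < M)%E.
  by apply: lt_le_trans (rayleigh_le_bigmax_rho_plus X v_neq0 supp_v); rewrite lte_fin.
apply: ereal_ratio_le => //.
- by rewrite ge0_fin_numE ?rho_minus_ge0 // (le_lt_trans m_le) ?ltry.
- apply: lt_le_trans (ccomplex_le_sum cl_ge0 Bbar j).
  exact: ccomplex_gt0 (suppv_neq0 v_neq0 supp_v).
move=> rho mu sigma phi m_eq M_eq S_eq P_eq.
have [w [w_ge0 sum_w proj_le]] := phi_blk_weights cl_ge0 subadd cF_fin cF_le S_eq P_eq.
apply: (gap_le supp_beta beta_opt supp_betabar _ _ w_ge0 sum_w proj_le) => //.
- by rewrite -lee_fin -P_eq.
- by rewrite -lee_fin -M_eq ltW.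
- move=> i u u_neq0 supp_u; rewrite -lee_fin -M_eq.
  exact: rayleigh_le_bigmax_rho_plus u_neq0 supp_u.
- by rewrite -lee_fin -m_eq.
Qed.
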